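(* Let $S$ be an inverse semigroup, regarded as an algebraic structure in the language $\mathcal{L}=\{\cdot,{}^{-1}\}\cup\{s\mid s\in S\}$, and let $E=\{e\in S\mid ee=e\}$ be its set of idempotents. Suppose $E$ is linearly ordered by the natural order on idempotents and $|E|>1$. Then $S$ is not an equational domain in the language $\mathcal{L}$.
   Context: A semigroup $S$ is inverse if for every $s\in S$ there is a unique $s^{-1}\in S$ with $ss^{-1}s=s$ and $s^{-1}ss^{-1}=s^{-1}$; its idempotents commute. The natural order on idempotents is $e\le f \iff ef=e$. The language $\mathcal{L}$ consists of multiplication, inversion, and a constant symbol for every element of $S$. For variables $x_1,\dots,x_n$, a term of $\mathcal{L}$ is a finite product of variables raised to integer powers and constants from $S$. An equation is an equality of two terms; a system of equations is an arbitrary set of equations in $x_1,\dots,x_n$. A set $Y\subseteq S^n$ is algebraic over $S$ if it is the set of all tuples in $S^n$ satisfying all equations of some system. $S$ is an equational domain (in $\mathcal{L}$) if for every $n$, every finite union of algebraic subsets of $S^n$ is algebraic. *)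

From mathcomp Require Import all_boot.
Set Implicit Arguments. Unset Strict Implicit. Unset Printing Implicit Defensive.

Section InverseSemigroup.
Variables (S : Type) (mul : S -> S -> S) (inv : S -> S).

Record inverse_semigroup : Prop := {
  isg_assoc : forall x y z, mul x (mul y z) = mul (mul x y) z;
  isg_inv1 : forall s, mul (mul s (inv s)) s = s;
  isg_inv2 : forall s, mul (mul (inv s) s) (inv s) = inv s;
  isg_inv_unique : forall s t, mul (mul s t) s = s -> mul (mul t s) t = t -> t = inv s
}.

Definition idempotent (e : S) : Prop := mul e e = e.

Definition nat_le (e f : S) : Prop := mul e f = e.

Definition idempotents_linear : Prop :=
  forall e f, idempotent e -> idempotent f -> nat_le e f \/ nat_le f e.

Definition idempotents_nontrivial : Prop :=
  exists e f, idempotent e /\ idempotent f /\ e <> f.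

Inductive term (n : nat) : Type :=
  | TVar : 'I_n -> term n
  | TConst : S -> term n
  | TMul : term n -> term n -> term n
  | TInv : term n -> term n.

Fixpoint eval (n : nat) (p : 'I_n -> S) (t : term n) : S :=
  match t with
  | TVar i => p i
  | TConst s => s
  | TMul t1 t2 => mul (eval p t1) (eval p t2)
  | TInv t1 => inv (eval p t1)
  end.

Definition algebraic (n : nat) (Y : ('I_n -> S) -> Prop) : Prop :=
  exists Sys : (term n * term n) -> Prop,
    forall p, Y p <-> (forall eq, Sys eq -> eval p eq.1 = eval p eq.2).

Definition equational_domain : Prop :=
  forall (n m : nat) (Ys : 'I_m -> ('I_n -> S) -> Prop),
    (forall i, algebraic (Ys i)) -> algebraic (fun p => exists i, Ys i p).

End InverseSemigroup.

(* Fix idempotents lo < hi and let Y_i = {x : x_i = hi} for i = 0, 1.  Call c the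
   meet of a and b if a, b are comparable in the natural partial order of S and c is
   the smaller one.  Linearity of E makes meets compatible with multiplication and
   inversion, so for every term t, t(q) is the meet of t(p1) and t(p2) whenever q is
   the coordinatewise meet of p1 and p2.  Hence any algebraic set containing
   p1 = (hi, lo) and p2 = (lo, hi) contains q = (lo, lo), which lies in neither Y_i. *)
From Pilot Require Import Defs.
From mathcomp Require Import all_boot.
Set Implicit Arguments. Unset Strict Implicit.

Section InverseSemigroupTheory.
Variables (S : Type) (mul : S -> S -> S) (inv : S -> S).
Hypothesis HS : inverse_semigroup mul inv.
Local Notation "x ** y" := (mul x y) (at level 40, left associativity).
Local Notation idem := (Defs.idempotent mul).

Lemma mulA x y z : x ** (y ** z) = x ** y ** z. Proof. exact: (isg_assoc HS). Qed.
Lemma mul_inv_mul s : s ** inv s ** s = s. Proof. exact: (isg_inv1 HS). Qed.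
Lemma inv_mul_inv s : inv s ** s ** inv s = inv s. Proof. exact: (isg_inv2 HS). Qed.
Lemma inv_unique s t : s ** t ** s = s -> t ** s ** t = t -> t = inv s.
Proof. exact: (isg_inv_unique HS). Qed.

Lemma mul_inv_mulr s z : s ** (inv s ** (s ** z)) = s ** z.
Proof. by rewrite !mulA mul_inv_mul. Qed.

Lemma inv_mul_invr s z : inv s ** (s ** (inv s ** z)) = inv s ** z.
Proof. by rewrite !mulA inv_mul_inv. Qed.

Lemma idem_mulr g z : idem g -> g ** (g ** z) = g ** z.
Proof. by move=> Hg; rewrite mulA Hg. Qed.

Lemma idem_inv g : idem g -> inv g = g.
Proof. by move=> Hg; symmetry; apply: inv_unique; rewrite !Hg. Qed.

Lemma invK s : inv (inv s) = s.
Proof. by symmetry; apply: inv_unique; rewrite ?inv_mul_inv ?mul_inv_mul. Qed.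

Lemma idem_inv_mul s : idem (inv s ** s). Proof. by rewrite /Defs.idempotent mulA inv_mul_inv. Qed.
Lemma idem_mul_inv s : idem (s ** inv s). Proof. by rewrite /Defs.idempotent mulA mul_inv_mul. Qed.

Lemma idem_mul e f : idem e -> idem f -> idem (e ** f).
Proof.
move=> He Hf; set s := e ** f.
have invs : f ** inv s ** e = inv s.
  apply: inv_unique; rewrite /s -!mulA (idem_mulr _ Hf) (idem_mulr _ He) !mulA.
    by rewrite -(mulA _ e f) mul_inv_mul.
  by rewrite -(mulA _ e f) -!(mulA f) inv_mul_inv.
have idem_invs : idem (inv s).
  rewrite /Defs.idempotent -{1 2}invs /s !mulA -(mulA _ e f) -!(mulA f).
  by rewrite inv_mul_inv mulA invs.
by rewrite -(invK s) /Defs.idempotent (idem_inv idem_invs).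
Qed.

Lemma idem_comm e f : idem e -> idem f -> e ** f = f ** e.
Proof.
move=> He Hf; rewrite -(idem_inv (idem_mul He Hf)); symmetry; apply: inv_unique.
  by rewrite -!mulA (idem_mulr _ Hf) (idem_mulr _ He) mulA (idem_mul He Hf).
by rewrite -!mulA (idem_mulr _ He) (idem_mulr _ Hf) mulA (idem_mul Hf He).
Qed.

Lemma inv_mul s t : inv (s ** t) = inv t ** inv s.
Proof.
have C := idem_comm (idem_mul_inv t) (idem_inv_mul s).
symmetry; apply: inv_unique.
  have -> : s ** t ** (inv t ** inv s) ** (s ** t) =
            s ** ((t ** inv t) ** (inv s ** s)) ** t by rewrite -!mulA.
  by rewrite C -!mulA mul_inv_mulr (mulA t) mul_inv_mul.
have -> : inv t ** inv s ** (s ** t) ** (inv t ** inv s) =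
          inv t ** ((inv s ** s) ** (t ** inv t)) ** inv s by rewrite -!mulA.
by rewrite -C -!mulA inv_mul_invr (mulA (inv s)) inv_mul_inv.
Qed.

Lemma idem_conj g u : idem g -> idem (inv u ** g ** u).
Proof.
move=> Hg; rewrite /Defs.idempotent.
have -> : inv u ** g ** u ** (inv u ** g ** u) =
          inv u ** (g ** (u ** inv u)) ** g ** u by rewrite -!mulA.
by rewrite (idem_comm Hg (idem_mul_inv u)) -!mulA inv_mul_invr (idem_mulr _ Hg).
Qed.

Lemma idem_mul_conj g u : idem g -> g ** u = u ** (inv u ** g ** u).
Proof.
move=> Hg; have -> : u ** (inv u ** g ** u) = u ** inv u ** g ** u by rewrite -!mulA.
by rewrite -(idem_comm Hg (idem_mul_inv u)) -!mulA (mulA u) mul_inv_mul.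
Qed.

Definition natural_le s t := exists2 g, idem g & s = t ** g.

Lemma natural_le_refl s : natural_le s s.
Proof. by exists (inv s ** s); rewrite ?mulA ?mul_inv_mul //; exact: idem_inv_mul. Qed.

Lemma natural_le_trans s t u : natural_le s t -> natural_le t u -> natural_le s u.
Proof. by move=> [g Hg ->] [h Hh ->]; exists (h ** g); rewrite ?mulA //; exact: idem_mul. Qed.

Lemma natural_le_antisym s t : natural_le s t -> natural_le t s -> s = t.
Proof.
move=> [g Hg Hs] [h Hh Ht].
have Ht' : t = t ** g ** h by rewrite {1}Ht Hs.
by rewrite Hs {1}Ht' -!mulA (idem_comm Hh Hg) (idem_mulr _ Hg) mulA -Ht'.
Qed.

Lemma natural_le_mull u s t : natural_le s t -> natural_le (u ** s) (u ** t).
Proof. by move=> [g Hg ->]; exists g; rewrite ?mulA. Qed.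

Lemma natural_le_mulr u s t : natural_le s t -> natural_le (s ** u) (t ** u).
Proof.
move=> [g Hg ->]; exists (inv u ** g ** u); first exact: idem_conj.
by rewrite -mulA (idem_mul_conj u Hg) mulA.
Qed.

Lemma natural_le_inv s t : natural_le s t -> natural_le (inv s) (inv t).
Proof.
move=> [g Hg ->]; exists (inv (inv t) ** g ** inv t); first exact: idem_conj.
by rewrite inv_mul (idem_inv Hg) (idem_mul_conj (inv t) Hg).
Qed.

Lemma natural_le_dom a b : natural_le a b -> a = b ** (inv a ** a).
Proof.
move=> [g Hg ->]; rewrite inv_mul (idem_inv Hg).
have -> : b ** (g ** inv b ** (b ** g)) = b ** ((g ** (inv b ** b)) ** g)
  by rewrite -!mulA.
by rewrite (idem_comm Hg (idem_inv_mul b)) -!mulA mul_inv_mulr Hg.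
Qed.

Lemma natural_le_ran a b : natural_le a b -> a = a ** inv a ** b.
Proof.
move=> [g Hg ->]; rewrite inv_mul (idem_inv Hg).
have -> : b ** g ** (g ** inv b) ** b = b ** (g ** g) ** (inv b ** b) by rewrite -!mulA.
by rewrite Hg -mulA (idem_comm Hg (idem_inv_mul b)) -!mulA mul_inv_mulr.
Qed.

Hypothesis Hlin : idempotents_linear mul.

(* Comparing the idempotents inv a ** a and b' ** inv b' decides which factor of
   the cross product a ** b' can be enlarged without changing it. *)
Lemma mul_natural_le_cross a b b' a' : natural_le a b -> natural_le b' a' ->
  a ** b' = a ** a' \/ a ** b' = b ** b'.
Proof.
move=> Hab Hba; have Ha := natural_le_dom Hab; have Hb' := natural_le_ran Hba.
case: (Hlin (idem_inv_mul a) (idem_mul_inv b')); rewrite /nat_le => H; [left | right].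
  have -> : a ** b' = a ** (inv a ** a ** (b' ** inv b')) ** a'
    by rewrite {1}Hb' !mulA mul_inv_mul.
  by rewrite H !mulA mul_inv_mul.
rewrite {1}Ha -{1}(mul_inv_mul b').
have -> : b ** (inv a ** a) ** (b' ** inv b' ** b') =
          b ** ((inv a ** a) ** (b' ** inv b')) ** b' by rewrite -!mulA.
by rewrite (idem_comm (idem_inv_mul a) (idem_mul_inv b')) H -!mulA (mulA b') mul_inv_mul.
Qed.

Definition natural_meet a b c :=
  (c = a /\ natural_le a b) \/ (c = b /\ natural_le b a).

Lemma natural_meet_refl a : natural_meet a a a.
Proof. by left; split=> //; exact: natural_le_refl. Qed.

Lemma natural_meet_unique a b c1 c2 :
  natural_meet a b c1 -> natural_meet a b c2 -> c1 = c2.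
Proof. by move=> [[-> H1]|[-> H1]] [[-> H2]|[-> H2]] //; exact: natural_le_antisym. Qed.

Lemma natural_meet_mul a b c a' b' c' : natural_meet a b c -> natural_meet a' b' c' ->
  natural_meet (a ** a') (b ** b') (c ** c').
Proof.
move=> [[-> H]|[-> H]] [[-> H']|[-> H']].
- by left; split=> //; exact: natural_le_trans (natural_le_mulr _ H) (natural_le_mull _ H').
- case: (mul_natural_le_cross H H') => E.
    by left; split=> //; rewrite -E; exact: natural_le_mulr.
  by right; split=> //; rewrite -E; exact: natural_le_mull.
- case: (mul_natural_le_cross H H') => E.
    by right; split=> //; rewrite -E; exact: natural_le_mulr.
  by left; split=> //; rewrite -E; exact: natural_le_mull.
- by right; split=> //; exact: natural_le_trans (natural_le_mulr _ H) (natural_le_mull _ H').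
Qed.

Lemma natural_meet_inv a b c :
  natural_meet a b c -> natural_meet (inv a) (inv b) (inv c).
Proof. by move=> [[-> H]|[-> H]]; [left|right]; split=> //; exact: natural_le_inv. Qed.

Lemma natural_meet_eval n (p1 p2 q : 'I_n -> S) :
  (forall i, natural_meet (p1 i) (p2 i) (q i)) ->
  forall t, natural_meet (eval mul inv p1 t) (eval mul inv p2 t) (eval mul inv q t).
Proof.
move=> Hq; elim=> [i|c|t1 IH1 t2 IH2|t1 IH1] /=.
- exact: Hq.
- exact: natural_meet_refl.
- exact: natural_meet_mul.
- exact: natural_meet_inv.
Qed.

Lemma algebraic_natural_meet n (Y : ('I_n -> S) -> Prop) (p1 p2 q : 'I_n -> S) :
  algebraic mul inv Y -> (forall i, natural_meet (p1 i) (p2 i) (q i)) ->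
  Y p1 -> Y p2 -> Y q.
Proof.
move=> [Sys HSys] Hq /HSys Y1 /HSys Y2; apply/HSys => eq /[dup] /Y1 E1 /Y2 E2.
apply: natural_meet_unique (natural_meet_eval Hq eq.1) _.
by rewrite E1 E2; exact: natural_meet_eval.
Qed.

End InverseSemigroupTheory.

Theorem lemma4 (S : Type) (mul : S -> S -> S) (inv : S -> S)
  (HS : inverse_semigroup mul inv)
  (Hlin : idempotents_linear mul)
  (Hcard : idempotents_nontrivial mul) :
  ~ equational_domain mul inv.
Proof.
move=> HED.
have [lo [hi [Hlo [Hhi [lo_neq_hi lo_le_hi]]]]] : exists lo hi, Defs.idempotent mul lo /\
    Defs.idempotent mul hi /\ lo <> hi /\ mul lo hi = lo.
  case: Hcard => e [f [He [Hf Hef]]].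
  case: (Hlin _ _ He Hf) => H; [exists e, f | exists f, e]; do !split => //.
  by move/esym.
pose Ys (i : 'I_2) (p : 'I_2 -> S) := p i = hi.
have Ys_alg i : algebraic mul inv (Ys i).
  by exists (eq^~ (TVar S i, TConst 2 hi)) => p; split=> [Hp _ -> // | /(_ _ erefl)].
pose p1 (i : 'I_2) := if val i == 0 then hi else lo.
pose p2 (i : 'I_2) := if val i == 0 then lo else hi.
have lo_below_hi : natural_le mul lo hi.
  by exists lo; rewrite // -(idem_comm HS Hlo Hhi) lo_le_hi.
have meet_lo i : natural_meet mul (p1 i) (p2 i) lo.
  by rewrite /p1 /p2; case: ifP => _; [right | left].
have [i] : exists i, Ys i (fun _ => lo).
  apply: (algebraic_natural_meet HS Hlin (HED 2 2 Ys Ys_alg) meet_lo).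
    by exists ord0.
  by exists ord_max.
exact: lo_neq_hi.
Qed.
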